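(* Let $q$ be a prime and $1\le K<N$ with $q^K>2$. Let $G$ ($K\times N$) and $\mathbf{v}\in\mathbb{F}_q^N$ have independent uniformly distributed entries in $\mathbb{F}_q$, and for each message index $m$ let $\mathbf{x}_m=\mathbf{u}_mG+\mathbf{v}$, where $\mathbf{u}_m\in\mathbb{F}_q^K$ is the $q$-ary representation of $m$. Let $P_N(\mathbf{y}\mid\mathbf{x})$ be a channel transition probability from inputs $\mathbf{x}\in\mathbb{F}_q^N$ to outputs $\mathbf{y}$ in a finite set. For an input $\mathbf{x}$ and output $\mathbf{y}$ let $A(\mathbf{x},\mathbf{y})=\{\mathbf{x}'\in\mathbb{F}_q^N: P_N(\mathbf{y}\mid\mathbf{x}')\ge P_N(\mathbf{y}\mid\mathbf{x})\}$. Let $m,m',m''$ be distinct indices, fix a value $\mathbf{x}_m\in\mathbb{F}_q^N$ of the codeword of index $m$ and an output $\mathbf{y}$, and let $A_{j}(\mathbf{x}_m,\mathbf{y})$ denote the event $\{\mathbf{x}_j\in A(\mathbf{x}_m,\mathbf{y})\}$, probabilities being taken over the ensemble conditioned on the codeword of index $m$ being $\mathbf{x}_m$. Let $\alpha=\Pr(A_{m'}(\mathbf{x}_m,\mathbf{y}))$. Then: (i) if $\mathbf{u}_m\notin\mathrm{span}^*(\mathbf{u}_{m'},\mathbf{u}_{m''})$, then $\Pr(A_{m'}(\mathbf{x}_m,\mathbf{y})\cap A_{m''}(\mathbf{x}_m,\mathbf{y}))=\alpha^2$; (ii) if $\mathbf{u}_m\in\mathrm{span}^*(\mathbf{u}_{m'},\mathbf{u}_{m''})$,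 then $\Pr(A_{m'}(\mathbf{x}_m,\mathbf{y})\cap A_{m''}(\mathbf{x}_m,\mathbf{y}))\le\alpha$. Moreover $|\mathrm{span}^*(\mathbf{u}_{m'},\mathbf{u}_{m''})|=q$.
   Context: All operations are mod $q$. $\mathrm{span}^*(\mathbf{w}_1,\mathbf{w}_2)=\mathbf{w}_1+\mathrm{span}(\mathbf{w}_2-\mathbf{w}_1)$, the affine line through $\mathbf{w}_1,\mathbf{w}_2$ in $\mathbb{F}_q^K$. *)

From HB Require Import structures.
From mathcomp Require Import all_boot all_order all_algebra.
Set Implicit Arguments. Unset Strict Implicit. Unset Printing Implicit Defensive.
Import Order.TTheory GRing.Theory Num.Theory.
Local Open Scope ring_scope.

Definition uvec (q K : nat) (m : nat) : 'rV['F_q]_K :=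
  \row_(i < K) (((m %/ q ^ i) %% q)%N)%:R.

Definition spanstar (q K : nat) (w1 w2 : 'rV['F_q]_K) : {set 'rV['F_q]_K} :=
  [set w1 + c *: (w2 - w1) | c : 'F_q].

(* the ensemble: a pair (G, v), G : K x N generator, v : dither vector *)
Definition ens (q K N : nat) : finType :=
  ('M['F_q]_(K, N) * 'rV['F_q]_N)%type.

Definition codeword (q K N : nat) (u : 'rV['F_q]_K) (p : ens q K N) : 'rV['F_q]_N :=
  u *m p.1 + p.2.

Definition Aset (R : realFieldType) (q N : nat) (Y : finType)
  (P : 'rV['F_q]_N -> Y -> R) (x : 'rV['F_q]_N) (y : Y) : {set 'rV['F_q]_N} :=
  [set x' | P x y <= P x' y].

(* probability of event E under the uniform ensemble, conditioned on the
   codeword with information vector um being equal to a *)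
Definition condPr (R : realFieldType) (q K N : nat) (um : 'rV['F_q]_K)
  (a : 'rV['F_q]_N) (E : pred (ens q K N)) : R :=
  (#|[set p : ens q K N | (codeword um p == a) && E p]|%:R /
   #|[set p : ens q K N | codeword um p == a]|%:R).

(* Conditioned on [x_m = a], the dither is [v = a - u_m G], so [x_j = (u_j - u_m) G + a]
   with G uniform.  If [u_m] is off the line through [u_m'] and [u_m''], the rows
   [u_m' - u_m] and [u_m'' - u_m] are linearly independent, so [G |-> (x_m', x_m'')] is a
   surjective linear map with fibres of equal size: the pair is uniform, hence
   independent.  On the line, the intersection of the two events is contained in the
   first one.  The line has q points since [u_m' <> u_m''] (digit expansions are
   unique). *)

From HB Require Import structures.
From mathcomp Require Import all_boot all_order all_algebra.
From mathcomp Require Import ring.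
Set Implicit Arguments. Unset Strict Implicit. Unset Printing Implicit Defensive.
Import Order.TTheory GRing.Theory Num.Theory.
Local Open Scope ring_scope.

Lemma eq_from_digits (q K m m' : nat) : (0 < q)%N ->
  (m < q ^ K)%N -> (m' < q ^ K)%N ->
  (forall i, i < K -> (m %/ q ^ i) %% q = (m' %/ q ^ i) %% q)%N -> m = m'.
Proof.
move=> q_gt0; elim: K m m' => [|K IH] m m'.
  by rewrite expn0 !ltnS !leqn0 => /eqP -> /eqP ->.
move=> ltm ltm' eq_dig.
have eq_low := eq_dig 0%N isT; rewrite expn0 !divn1 in eq_low.
have eq_high : (m %/ q = m' %/ q)%N.
  apply: IH; try by rewrite ltn_divLR // -expnSr.
  by move=> i lt_iK; rewrite -!divnMA -expnS; apply: eq_dig.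
by rewrite (divn_eq m q) (divn_eq m' q) eq_high eq_low.
Qed.

Lemma uvec_inj (q K : nat) : prime q -> injective (fun m : 'I_(q ^ K) => uvec q K m).
Proof.
move=> q_pr m m' eq_u; apply: val_inj.
apply: (eq_from_digits (prime_gt0 q_pr) (ltn_ord m) (ltn_ord m')) => i lt_iK.
have /(congr1 val) := congr1 (fun u : 'rV['F_q]_K => u 0 (Ordinal lt_iK)) eq_u.
by rewrite !mxE /= !(val_Fp_nat q_pr) !modn_mod.
Qed.

Lemma card_spanstar (q K : nat) (w1 w2 : 'rV['F_q]_K) :
  prime q -> w1 != w2 -> #|spanstar w1 w2| = q.
Proof.
move=> q_pr neq_w; rewrite card_imset ?card_Fp // => c c' /addrI /eqP.
rewrite -subr_eq0 -scalerBl scaler_eq0 !subr_eq0 [w2 == _]eq_sym (negbTE neq_w) orbF.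
by move/eqP.
Qed.

Lemma row_free_sub_notin_spanstar (q K : nat) (u u1 u2 : 'rV['F_q]_K) :
  u \notin spanstar u1 u2 -> u1 != u2 -> row_free (col_mx (u1 - u) (u2 - u)).
Proof.
move=> u_notin neq_u; rewrite -kermx_eq0; apply: contraT => /rowV0Pn [v /sub_kermxP].
rewrite -[v](@hsubmxK _ 1 1 1) mul_row_col [lsubmx v]mx11_scalar [rsubmx v]mx11_scalar.
rewrite !mul_scalar_mx; set a := lsubmx v 0 0; set b := rsubmx v 0 0 => comb v_neq0.
have comb_j j : a * (u1 0 j - u 0 j) + b * (u2 0 j - u 0 j) = 0.
  by have := congr1 (fun w : 'rV['F_q]_K => w 0 j) comb; rewrite !mxE.
have [ab0 | ab_neq0] := eqVneq (a + b) 0.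
  have b_opp : b = - a by apply/eqP; rewrite -addr_eq0 addrC ab0.
  have [a0 | a_neq0] := eqVneq a 0.
    by move: v_neq0; rewrite b_opp a0 oppr0 !raddf0 row_mx0 eqxx.
  move: neq_u; apply: contraNT => _; apply/eqP/rowP => j.
  have /eqP : a * (u1 0 j - u2 0 j) = 0 by rewrite -(comb_j j) b_opp; ring.
  by rewrite mulf_eq0 (negbTE a_neq0) subr_eq0 => /eqP.
(* a dependence with [a + b <> 0] exhibits [u] as a barycentre of [u1] and [u2] *)
move: u_notin; apply: contraNT => _; apply/imsetP; exists (b / (a + b)) => //.
apply/rowP => j; rewrite !mxE.
have -> : u 0 j = (a * u1 0 j + b * u2 0 j) / (a + b).
  by apply: (mulIf ab_neq0); rewrite mulfVK // -[RHS]subr0 -(comb_j j); ring.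
by field.
Qed.

Section UniformMatrix.

Variables (R : numFieldType) (F : finZmodType).

Definition mxPr (m n : nat) (S : pred 'M[F]_(m, n)) : R :=
  #|[set G | S G]|%:R / #|{: 'M[F]_(m, n)}|%:R.

Lemma eq_mxPr m n (S S' : pred 'M[F]_(m, n)) : S =1 S' -> mxPr S = mxPr S'.
Proof. by move=> eqS; rewrite /mxPr (eq_card (B := [set G | S' G])) // => G; rewrite !inE. Qed.

Lemma mxPrT m n : mxPr (@predT 'M[F]_(m, n)) = 1.
Proof.
by rewrite /mxPr -cardsT divff // pnatr_eq0 -lt0n; apply/card_gt0P; exists 0.
Qed.

Lemma le_mxPr m n (S S' : pred 'M[F]_(m, n)) :
  (forall G, S G -> S' G) -> mxPr S <= mxPr S'.
Proof.
move=> subS; apply: ler_wpM2r; first by rewrite invr_ge0 ler0n.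
rewrite ler_nat; apply/subset_leq_card/subsetP => G; rewrite !inE; exact: subS.
Qed.

Lemma mxPr_col_mx m1 m2 n (S1 : pred 'M[F]_(m1, n)) (S2 : pred 'M[F]_(m2, n)) :
  mxPr (fun H => S1 (usubmx H) && S2 (dsubmx H)) = mxPr S1 * mxPr S2.
Proof.
have card_blocks : #|[set H : 'M_(m1 + m2, n) | S1 (usubmx H) && S2 (dsubmx H)]|
                   = (#|[set G | S1 G]| * #|[set G | S2 G]|)%N.
  have col_inj : injective (fun G : 'M[F]_(m1, n) * 'M[F]_(m2, n) => col_mx G.1 G.2).
    by move=> [G1 G2] [G1' G2'] /eq_col_mx /= [-> ->].
  rewrite -cardsX -(card_imset _ col_inj).
  apply: eq_card => H; rewrite inE; apply/idP/imsetP => [/andP[S1H S2H] | [[G1 G2]]].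
    by exists (usubmx H, dsubmx H); rewrite ?inE ?S1H ?S2H ?vsubmxK.
  by rewrite !inE /= => /andP[S1G S2G] ->; rewrite col_mxKu col_mxKd S1G S2G.
rewrite /mxPr card_blocks !card_mx mulnDl expnD !natrM.
by rewrite invfM mulrACA.
Qed.

End UniformMatrix.

Section LinearPushforward.

Variables (R : numFieldType) (F : finFieldType) (K N k : nat) (D : 'M[F]_(k, K)).
Hypothesis D_free : row_free D.

(* each fibre of [G |-> D G] is a translate [E H + ker] of the kernel, [E] a right inverse *)
Lemma card_preim_mulmx (S : pred 'M[F]_(k, N)) :
  #|[set G : 'M[F]_(K, N) | S (D *m G)]|
  = (#|[set H | S H]| * #|[set G : 'M[F]_(K, N) | D *m G == 0%R]|)%N.
Proof.
have [E DE] := row_freeP D_free.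
have DEH H : D *m (E *m H) = H by rewrite mulmxA DE mul1mx.
rewrite -cardsX -(card_in_imset (f := fun p => E *m p.1 + p.2)) /=.
  apply: eq_card => G; rewrite inE; apply/idP/imsetP => [SG | [[H G0]]].
    exists (D *m G, G - E *m (D *m G)); last by rewrite /= addrC subrK.
    by rewrite !inE /= SG mulmxBr DEH subrr eqxx.
  by rewrite !inE /= => /andP[SH /eqP DG0] ->; rewrite mulmxDr DEH DG0 addr0.
move=> [H G0] [H' G0']; rewrite !inE /= => /andP[_ /eqP DG0] /andP[_ /eqP DG0'] eqG.
have eqH : H = H' by have := congr1 (mulmx D) eqG; rewrite !mulmxDr !DEH DG0 DG0' !addr0.
by move: eqG; rewrite eqH => /addrI ->.
Qed.

Lemma mxPr_mulmx (S : pred 'M[F]_(k, N)) :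
  mxPr R (fun G : 'M[F]_(K, N) => S (D *m G)) = mxPr R S.
Proof.
have card_all : #|{: 'M[F]_(K, N)}|
    = (#|{: 'M[F]_(k, N)}| * #|[set G : 'M[F]_(K, N) | D *m G == 0%R]|)%N.
  by rewrite -!cardsT -(card_preim_mulmx predT).
have ker_gt0 : (0 < #|[set G : 'M[F]_(K, N) | D *m G == 0%R]|)%N.
  by apply/card_gt0P; exists 0; rewrite inE mulmx0.
rewrite /mxPr card_preim_mulmx card_all !natrM invfM mulrACA divff ?mulr1 //.
by rewrite pnatr_eq0 -lt0n.
Qed.

End LinearPushforward.

Lemma condPr_mxPr (R : realFieldType) (q K N : nat) (um : 'rV['F_q]_K)
  (a : 'rV['F_q]_N) (E : pred (ens q K N)) :
  condPr R um a E = mxPr R (fun G : 'M['F_q]_(K, N) => E (G, a - um *m G)).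
Proof.
have cond_count (E' : pred (ens q K N)) :
    #|[set p : ens q K N | (codeword um p == a) && E' p]|
    = #|[set G : 'M['F_q]_(K, N) | E' (G, a - um *m G)]|.
  have shift_inj : injective (fun G : 'M['F_q]_(K, N) => (G, a - um *m G)).
    by move=> G G' /(congr1 fst).
  rewrite -(card_imset _ shift_inj); apply: eq_card => -[G v]; rewrite !inE /codeword /=.
  apply/idP/imsetP => [/andP[/eqP <- E'p] | [G' E'G' [-> ->]]].
    by exists G; rewrite ?inE addrC addKr.
  by rewrite inE in E'G'; rewrite addrC subrK eqxx.
rewrite /condPr cond_count.
have -> : [set p | codeword um p == a] = [set p : ens q K N | (codeword um p == a) && predT p].
  by apply/setP => p; rewrite !inE andbT.
by rewrite cond_count /mxPr -cardsT.
Qed.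

Lemma codeword_shift (q K N : nat) (um uj : 'rV['F_q]_K) (a : 'rV['F_q]_N) G :
  codeword uj ((G, a - um *m G) : ens q K N) = (uj - um) *m G + a.
Proof. by rewrite /codeword /= mulmxBl -addrA (addrC a). Qed.

Theorem lemma1 (R : realFieldType) (q K N : nat) (Y : finType)
  (P : 'rV['F_q]_N -> Y -> R)
  (hq : prime q) (hK : (1 <= K)%N) (hKN : (K < N)%N) (hqK : (2 < q ^ K)%N)
  (P_ge0 : forall x y, 0 <= P x y)
  (P_sum1 : forall x, \sum_(y : Y) P x y = 1)
  (m m' m'' : 'I_(q ^ K))
  (hmm' : m != m') (hmm'' : m != m'') (hm'm'' : m' != m'')
  (xm : 'rV['F_q]_N) (y : Y) :
  let um := uvec q K m in
  let um' := uvec q K m' in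
  let um'' := uvec q K m'' in
  let A := Aset P xm y in
  let alpha := condPr R um xm (fun p => codeword um' p \in A) in
  let both := condPr R um xm
                (fun p => (codeword um' p \in A) && (codeword um'' p \in A)) in
  (um \notin spanstar um' um'' -> both = alpha ^+ 2) /\
  (um \in spanstar um' um'' -> both <= alpha) /\
  #|spanstar um' um''| = q.
Proof.
move=> um um' um'' A alpha both.
have neq_u : um' != um'' by apply: contraNneq hm'm'' => /(@uvec_inj q K hq) ->.
pose inA (x : 'rV['F_q]_N) := x + xm \in A.
have alphaE : alpha = mxPr R (fun G => inA ((um' - um) *m G)).
  by rewrite /alpha condPr_mxPr; apply: eq_mxPr => G; rewrite codeword_shift.
have bothE : both = mxPr R (fun G => inA ((um' - um) *m G) && inA ((um'' - um) *m G)).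
  by rewrite /both condPr_mxPr; apply: eq_mxPr => G; rewrite !codeword_shift.
split; [|split]; last exact: card_spanstar.
- move=> um_notin; have D_free := row_free_sub_notin_spanstar um_notin neq_u.
  have pair_law (S1 S2 : pred 'rV['F_q]_N) :
      mxPr R (fun G => S1 ((um' - um) *m G) && S2 ((um'' - um) *m G))
      = mxPr R S1 * mxPr R S2.
    rewrite -mxPr_col_mx -(mxPr_mulmx R D_free); apply: eq_mxPr => G.
    by rewrite mul_col_mx col_mxKu col_mxKd.
  have alpha_law : alpha = mxPr R inA.
    rewrite alphaE -[mxPr R inA]mulr1 -(mxPrT R 'F_q 1 N) -pair_law.
    by apply: eq_mxPr => G; rewrite andbT.
  by rewrite bothE pair_law alpha_law.
- by move=> _; rewrite bothE alphaE; apply: le_mxPr => G /andP[].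
Qed.
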